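(* Let $M=\mathbb R^3$ with the Euclidean metric, $\mathcal D=[0,1]$, and let $r,h:I\to\mathbb R$ be smooth with $r>0$ and $h$ nowhere zero. Consider the path of helices $c(s,t)=(r(s)\cos t,\ r(s)\sin t,\ h(s)t)$. Then $c$ is horizontal and a geodesic if and only if $h'=0$ and \[ \Big((r')^2\Big(\sqrt{r^2+h^2}+\frac{1}{\sqrt{r^2+h^2}}\Big)\Big)'=0. \]
   Context: $I=[0,1]$; $'$ denotes $\partial_s$. For a path $c:I\times\mathcal D\to\mathbb R^3$ of immersed curves write $\dot c=\partial_t c$, $c'=\partial_s c$, $\omega=|\dot c|>0$, $T=\dot c/\omega$, and $\nabla_TX=\omega^{-1}\partial_tX$ for vector fields $X$ along $c$. With $\eta=c'-\nabla_T\nabla_T c'$, the path is called horizontal if $\langle\eta,T\rangle=0$ everywhere on $I\times\mathcal D$. The first order Sobolev metric is $G_{\gamma}(h,k)=\int_{\mathcal D} \big(\langle h,k\rangle+\langle\nabla_Th,\nabla_Tk\rangle\big)\,\omega\,dt$, the speed is $\nu(s)=\sqrt{G_{c(s,\cdot)}(c',c')}$, and following the paper the path is called a geodesic if $\nu$ is constant in $s$. *)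

From Stdlib Require Import Reals.
From Coquelicot Require Import Coquelicot.
Open Scope R_scope.

Definition R3 := (R * R * R)%type.
Definition mk3 (a b c : R) : R3 := (a, b, c).
Definition x1 (v : R3) : R := fst (fst v).
Definition x2 (v : R3) : R := snd (fst v).
Definition x3 (v : R3) : R := snd v.
Definition dot3 (u v : R3) : R := x1 u * x1 v + x2 u * x2 v + x3 u * x3 v.
Definition norm3 (v : R3) : R := sqrt (dot3 v v).
Definition add3 (u v : R3) : R3 := mk3 (x1 u + x1 v) (x2 u + x2 v) (x3 u + x3 v).
Definition sub3 (u v : R3) : R3 := mk3 (x1 u - x1 v) (x2 u - x2 v) (x3 u - x3 v).
Definition scal3 (a : R) (v : R3) : R3 := mk3 (a * x1 v) (a * x2 v) (a * x3 v).

(* A path of curves c : I x D -> R^3, written c s t (s in I = [0,1], t in D = [0,1]).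
   Vector fields along c are maps of the same type. *)
Definition field := R -> R -> R3.

(* partial derivatives in t (dot) and in s (prime), componentwise *)
Definition d_t (X : field) : field := fun s t =>
  mk3 (Derive (fun u => x1 (X s u)) t)
      (Derive (fun u => x2 (X s u)) t)
      (Derive (fun u => x3 (X s u)) t).
Definition d_s (X : field) : field := fun s t =>
  mk3 (Derive (fun u => x1 (X u t)) s)
      (Derive (fun u => x2 (X u t)) s)
      (Derive (fun u => x3 (X u t)) s).

Definition omega (c : field) (s t : R) : R := norm3 (d_t c s t).
Definition unitT (c : field) : field := fun s t => scal3 (/ omega c s t) (d_t c s t).
Definition nablaT (c : field) (X : field) : field :=
  fun s t => scal3 (/ omega c s t) (d_t X s t).

Definition eta (c : field) : field :=
  fun s t => sub3 (d_s c s t) (nablaT c (nablaT c (d_s c)) s t).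

Definition inI (x : R) : Prop := 0 <= x <= 1.

Definition horizontal (c : field) : Prop :=
  forall s t, inI s -> inI t -> dot3 (eta c s t) (unitT c s t) = 0.

Definition G1 (c : field) (s : R) (h k : field) : R :=
  RInt (fun t => (dot3 (h s t) (k s t) + dot3 (nablaT c h s t) (nablaT c k s t))
                 * omega c s t) 0 1.

Definition speed (c : field) (s : R) : R := sqrt (G1 c s (d_s c) (d_s c)).

(* geodesic (in the sense of the paper): the speed is constant in s on I *)
Definition geodesic (c : field) : Prop :=
  exists C : R, forall s, inI s -> speed c s = C.

Definition smooth (f : R -> R) : Prop := forall (n : nat) (x : R), ex_derive_n f n x.

Definition helix_path (r h : R -> R) : field :=
  fun s t => mk3 (r s * cos t) (r s * sin t) (h s * t).

From Stdlib Require Import Reals Lra.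
From Coquelicot Require Import Coquelicot.
Open Scope R_scope.

(* For the helix path c(s,t) = (r cos t, r sin t, h t) every
   quantity entering the definitions is computed in closed form:
     c_dot = (-r sin t, r cos t, h),   omega = W := sqrt (r^2 + h^2),
     c'    = (r' cos t, r' sin t, h' t),
     nabla_T c'         = W^-1 (-r' sin t, r' cos t, h'),
     nabla_T nabla_T c' = W^-2 (-r' cos t, -r' sin t, 0),
   whence <eta, T> = W^-1 h' h t.  Since h never vanishes, horizontality is
   equivalent to h' = 0 on I.  When h' = 0, the integrand of G(c', c') no
   longer depends on t and the squared speed is E := r'^2 (W + 1/W).  As E >= 0,
   the speed sqrt E is constant on I exactly when E is, i.e. (by the mean value
   theorem in one direction, and by a one-sided difference quotient at every
   point of I in the other) exactly when E' = 0 on I. *)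

(* From any point of a nondegenerate closed interval one can move by an
   arbitrarily small nonzero step and stay inside; at the right endpoint the
   step has to go leftwards, which is why derivatives there are one-sided. *)
Lemma small_step_inside (a b s d : R) :
  a < b -> a <= s <= b -> 0 < d ->
  exists e, e <> 0 /\ Rabs e < d /\ a <= s + e <= b.
Proof.
  intros Hab Hs Hd.
  destruct (Rlt_or_le s b) as [Hsb | Hsb].
  - exists (Rmin (d / 2) (b - s)).
    pose proof (Rmin_l (d / 2) (b - s)); pose proof (Rmin_r (d / 2) (b - s)).
    assert (0 < Rmin (d / 2) (b - s)) by (apply Rmin_glb_lt; lra).
    rewrite Rabs_pos_eq by lra; repeat split; lra.
  - exists (- Rmin (d / 2) (b - a)).
    pose proof (Rmin_l (d / 2) (b - a)); pose proof (Rmin_r (d / 2) (b - a)).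
    assert (0 < Rmin (d / 2) (b - a)) by (apply Rmin_glb_lt; lra).
    rewrite Rabs_Ropp, Rabs_pos_eq by lra; repeat split; lra.
Qed.

Lemma derive_zero_of_const_on (F : R -> R) (a b s l K : R) :
  a < b -> a <= s <= b -> is_derive F s l ->
  (forall u, a <= u <= b -> F u = K) -> l = 0.
Proof.
  intros Hab Hs HF HK.
  apply is_derive_Reals in HF.
  destruct (Req_dec l 0) as [| Hl]; [assumption | exfalso].
  assert (Hl_pos : 0 < Rabs l) by now apply Rabs_pos_lt.
  destruct (HF (Rabs l / 2)) as [d Hd]; [lra |].
  destruct (small_step_inside a b s d Hab Hs (cond_pos d)) as (e & He0 & Hed & Hse).
  specialize (Hd e He0 Hed).
  rewrite (HK (s + e)), (HK s) in Hd by lra.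
  replace ((K - K) / e - l) with (- l) in Hd by (field; assumption).
  rewrite Rabs_Ropp in Hd; lra.
Qed.

Lemma const_on_of_derive_zero (F : R -> R) (a b : R) :
  (forall u, a <= u <= b -> ex_derive F u) ->
  (forall u, a <= u <= b -> Derive F u = 0) ->
  forall s, a <= s <= b -> F s = F a.
Proof.
  intros HD H0 s Hs.
  destruct (MVT_gen F a s (Derive F)) as (x & Hx & E).
  - intros x Hx; rewrite Rmin_left, Rmax_right in Hx by lra.
    apply Derive_correct, HD; lra.
  - intros x Hx; rewrite Rmin_left, Rmax_right in Hx by lra.
    apply (proj2 (continuity_pt_filterlim F x)), (ex_derive_continuous F x), HD; lra.
  - rewrite Rmin_left, Rmax_right in Hx by lra.
    rewrite H0 in E by lra; lra.
Qed.

(* |c_dot| for the helix path, and the squared speed of the path when h' = 0. *)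
Definition helix_slant (r h : R -> R) (s : R) : R := sqrt (r s ^ 2 + h s ^ 2).

Definition helix_energy (r h : R -> R) (s : R) : R :=
  Derive r s ^ 2 * (helix_slant r h s + / helix_slant r h s).

Lemma mk3_eq (a b d a' b' d' : R) :
  a = a' -> b = b' -> d = d' -> mk3 a b d = mk3 a' b' d'.
Proof. intros -> -> ->; reflexivity. Qed.

Section HelixPath.

Variables r h : R -> R.
Hypothesis r_derivable : forall s, ex_derive r s.
Hypothesis h_derivable : forall s, ex_derive h s.

Let c := helix_path r h.
Let W := helix_slant r h.

Lemma helix_d_t (s t : R) : d_t c s t = mk3 (- (r s * sin t)) (r s * cos t) (h s).
Proof.
  unfold d_t, c, helix_path; cbn [x1 x2 x3 mk3 fst snd]; apply mk3_eq;
    apply is_derive_unique; auto_derive; auto; ring.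
Qed.

Lemma helix_omega (s t : R) : omega c s t = W s.
Proof.
  unfold omega, norm3, W, helix_slant; rewrite helix_d_t.
  unfold dot3; cbn [x1 x2 x3 mk3 fst snd]; f_equal.
  pose proof (sin2_cos2 t) as Hsc; unfold Rsqr in Hsc; nra.
Qed.

Lemma helix_d_s (s t : R) :
  d_s c s t = mk3 (Derive r s * cos t) (Derive r s * sin t) (Derive h s * t).
Proof.
  unfold d_s, c, helix_path; cbn [x1 x2 x3 mk3 fst snd]; apply mk3_eq;
    apply is_derive_unique; auto_derive; auto;
    now rewrite Rmult_1_l.
Qed.

Lemma helix_nabla_d_s (s t : R) :
  nablaT c (d_s c) s t =
  scal3 (/ W s) (mk3 (- (Derive r s * sin t)) (Derive r s * cos t) (Derive h s)).
Proof.
  unfold nablaT; rewrite helix_omega; f_equal; unfold d_t.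
  apply mk3_eq; erewrite Derive_ext by (intro u; rewrite helix_d_s; reflexivity);
    cbn [x1 x2 x3 mk3 fst snd]; apply is_derive_unique; auto_derive; auto; ring.
Qed.

Lemma helix_nabla2_d_s (s t : R) :
  nablaT c (nablaT c (d_s c)) s t =
  scal3 (/ W s) (mk3 (/ W s * - (Derive r s * cos t)) (/ W s * - (Derive r s * sin t)) 0).
Proof.
  unfold nablaT at 1; rewrite helix_omega; f_equal; unfold d_t.
  apply mk3_eq; erewrite Derive_ext by (intro u; rewrite helix_nabla_d_s; reflexivity);
    unfold scal3; cbn [x1 x2 x3 mk3 fst snd];
    apply is_derive_unique; auto_derive; auto; ring.
Qed.

Lemma helix_eta_T (s t : R) :
  dot3 (eta c s t) (unitT c s t) = / W s * (Derive h s * t * h s).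
Proof.
  unfold eta, unitT; rewrite helix_nabla2_d_s, helix_d_s, helix_d_t, helix_omega.
  unfold dot3, sub3, scal3; cbn [x1 x2 x3 mk3 fst snd]; ring.
Qed.

(* When h' = 0 the integrand of G(c', c') is the constant E, so nu = sqrt E. *)
Lemma helix_speed (s : R) :
  Derive h s = 0 -> 0 < W s -> speed c s = sqrt (helix_energy r h s).
Proof.
  intros Hh0 HW; unfold speed, G1, helix_energy; fold W; f_equal.
  rewrite (RInt_ext _ (fun _ => Derive r s ^ 2 * (W s + / W s))).
  - rewrite RInt_const; unfold scal; simpl; unfold mult; simpl; ring.
  - (* the equation is stated on the normed-module carrier; view it on R *)
    intros t _; match goal with |- ?lhs = ?rhs => change (@eq R lhs rhs) end.
    rewrite helix_nabla_d_s, helix_d_s, helix_omega, Hh0.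
    unfold dot3, scal3; cbn [x1 x2 x3 mk3 fst snd].
    pose proof (sin2_cos2 t) as Hsc; unfold Rsqr in Hsc.
    rewrite <- (Rmult_1_r (Derive r s ^ 2)), <- Hsc; field; lra.
Qed.

End HelixPath.

Section HelixTheorem.

Variables r h : R -> R.
Hypothesis r_derivable : forall s, ex_derive r s.
Hypothesis r'_derivable : forall s, ex_derive (Derive r) s.
Hypothesis h_derivable : forall s, ex_derive h s.
Hypothesis r_pos : forall s, inI s -> 0 < r s.
Hypothesis h_nonzero : forall s, inI s -> h s <> 0.

Lemma helix_slant_pos (s : R) : inI s -> 0 < helix_slant r h s.
Proof.
  intros Hs; apply sqrt_lt_R0; specialize (r_pos s Hs); nra.
Qed.

Lemma helix_energy_nonneg (s : R) : inI s -> 0 <= helix_energy r h s.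
Proof.
  intros Hs; pose proof (helix_slant_pos s Hs) as HW; unfold helix_energy.
  apply Rmult_le_pos; [nra |].
  pose proof (Rinv_0_lt_compat _ HW); lra.
Qed.

Lemma helix_energy_derivable (s : R) : inI s -> ex_derive (helix_energy r h) s.
Proof.
  intros Hs; pose proof (helix_slant_pos s Hs) as HW.
  assert (Hrh : 0 < r s ^ 2 + h s ^ 2) by (specialize (r_pos s Hs); nra).
  unfold helix_energy, helix_slant in *; auto_derive.
  replace (r s * (r s * 1) + h s * (h s * 1)) with (r s ^ 2 + h s ^ 2) by ring.
  repeat split; auto; lra.
Qed.

Lemma helix_horizontal_iff :
  horizontal (helix_path r h) <-> (forall s, inI s -> Derive h s = 0).
Proof.
  unfold horizontal; split.
  - intros Hor s Hs.
    assert (Hdef := Hor s 1 Hs ltac:(unfold inI; lra)).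
    rewrite helix_eta_T, Rmult_1_r in Hdef by assumption.
    pose proof (Rinv_0_lt_compat _ (helix_slant_pos s Hs)).
    pose proof (h_nonzero s Hs).
    destruct (Rmult_integral _ _ Hdef) as [| Hprod]; [lra |].
    destruct (Rmult_integral _ _ Hprod); [assumption | contradiction].
  - intros Hh0 s t Hs _.
    rewrite helix_eta_T, (Hh0 s Hs) by assumption; ring.
Qed.

Lemma helix_geodesic_iff :
  (forall s, inI s -> Derive h s = 0) ->
  geodesic (helix_path r h) <-> (forall s, inI s -> Derive (helix_energy r h) s = 0).
Proof.
  intros Hh0.
  assert (Hspeed : forall s, inI s ->
            speed (helix_path r h) s = sqrt (helix_energy r h s)).
  { intros s Hs; apply helix_speed; auto using helix_slant_pos. }
  split.
  - intros [C HC] s Hs.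
    apply (derive_zero_of_const_on (helix_energy r h) 0 1 s _ (C * C));
      [lra | exact Hs | apply Derive_correct, helix_energy_derivable, Hs |].
    intros u Hu; rewrite <- (HC u Hu), Hspeed by exact Hu.
    now rewrite sqrt_sqrt by (apply helix_energy_nonneg, Hu).
  - intros HE; exists (sqrt (helix_energy r h 0)); intros s Hs.
    rewrite Hspeed by exact Hs; f_equal.
    exact (const_on_of_derive_zero _ 0 1 helix_energy_derivable HE s Hs).
Qed.

End HelixTheorem.

Theorem mainTheorem7 (r h : R -> R) :
  smooth r -> smooth h ->
  (forall s, inI s -> 0 < r s) ->
  (forall s, inI s -> h s <> 0) ->
  (horizontal (helix_path r h) /\ geodesic (helix_path r h) <->
   (forall s, inI s -> Derive h s = 0) /\
   (forall s, inI s ->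
      Derive (fun u => (Derive r u) ^ 2 *
                (sqrt (r u ^ 2 + h u ^ 2) + / sqrt (r u ^ 2 + h u ^ 2))) s = 0)).
Proof.
  intros Sr Sh Hr Hh.
  assert (Dr : forall s, ex_derive r s) by (intro s; exact (Sr 1%nat s)).
  assert (DDr : forall s, ex_derive (Derive r) s) by (intro s; exact (Sr 2%nat s)).
  assert (Dh : forall s, ex_derive h s) by (intro s; exact (Sh 1%nat s)).
  change (fun u => Derive r u ^ 2 *
            (sqrt (r u ^ 2 + h u ^ 2) + / sqrt (r u ^ 2 + h u ^ 2)))
    with (helix_energy r h).
  rewrite (helix_horizontal_iff r h Dr Dh Hr Hh).
  split; intros [Hh0 Hs]; split; try exact Hh0;
    now apply (helix_geodesic_iff r h Dr DDr Dh Hr Hh0).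
Qed.
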